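(* Let $f,g\in\mathcal{H}$ and let $\alpha>0$ be real. Then the germ of $x\mapsto f(x)^{\alpha g(x)}=\exp\big(\alpha\, g(x)\ln f(x)\big)$ belongs to $\mathcal{H}$.
   Context: All functions are real-valued functions defined on some interval $(a,\infty)$. Two such functions are identified if they agree for all sufficiently large $x$; these equivalence classes are germs at $+\infty$. Write $\ln^{(k)}$ for the $k$-fold iterated natural logarithm, with $\ln^{(0)}(x)=x$. Let $\mathcal{H}$ be the smallest set of germs at $+\infty$ satisfying: (i) $\ln^{(k)}\in\mathcal{H}$ for every integer $k\ge0$; (ii) if $f\in\mathcal{H}$, then $\exp\circ f\in\mathcal{H}$, and if moreover $f$ is eventually positive, then $f^\alpha\in\mathcal{H}$ for every real $\alpha>0$; (iii) if $f,g\in\mathcal{H}$ and $f\ne g$ (as germs), then $fg\in\mathcal{H}$; (iv) if $f,g\in\mathcal{H}$ and $f(x)/g(x)\to+\infty$, then $f/g\in\mathcal{H}$. (Every element of $\mathcal{H}$ tends to $+\infty$, so $\ln f$ is eventually defined.) *)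

From Stdlib Require Import Reals.
Open Scope R_scope.

(* Germs at +infinity are represented by total functions R -> R; two
   functions have the same germ iff they agree for all sufficiently large x. *)
Definition germ_eq (f g : R -> R) : Prop :=
  exists a : R, forall x : R, a < x -> f x = g x.

Definition eventually_pos (f : R -> R) : Prop :=
  exists a : R, forall x : R, a < x -> 0 < f x.

Definition tends_to_infty (f : R -> R) : Prop :=
  forall M : R, exists a : R, forall x : R, a < x -> M < f x.

Fixpoint iter_ln (k : nat) (x : R) : R :=
  match k with
  | O => x
  | S k' => ln (iter_ln k' x)
  end.

(* The smallest set of germs closed under (i)-(iv); membership of a function
   means membership of its germ, hence the closure constructor H_germ. *)
Inductive H : (R -> R) -> Prop :=
  | H_germ : forall f g, H f -> germ_eq f g -> H g
  | H_ln : forall k : nat, H (iter_ln k)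
  | H_exp : forall f, H f -> H (fun x => exp (f x))
  | H_pow : forall f (alpha : R), H f -> eventually_pos f -> 0 < alpha ->
      H (fun x => Rpower (f x) alpha)
  | H_mul : forall f g, H f -> H g -> ~ germ_eq f g -> H (fun x => f x * g x)
  | H_div : forall f g, H f -> H g -> tends_to_infty (fun x => f x / g x) ->
      H (fun x => f x / g x).

From Stdlib Require Import Reals Lra Classical.
Open Scope R_scope.

(* Every germ of H tends to +infinity: this is checked
   constructor by constructor, using that exp, ln, positive scalings and
   products preserve divergence to +infinity.  In particular every element
   of H is eventually positive, so ln f is meaningful.  Two derived closure
   properties follow: H is closed under ALL products (the excluded case
   f = g is the power f^2), and under x |-> exp (c * A x) for c > 0
   (as (exp A)^c).  The theorem is then proved by induction on the
   derivation of f ∈ H, for all g and alpha simultaneously, rewriting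
   f^(alpha g) = exp (alpha g ln f) according to the last rule used:
   ln (ln^(k)) = ln^(k+1) and ln (exp u) = u give exp (alpha * (g * u));
   ln (u^b) = b ln u changes alpha into alpha b; and ln of a product or a
   quotient splits exp (alpha g ln f) into a product or quotient of two
   germs given by the induction hypothesis (the quotient still tends to
   +infinity, as required by rule (iv)). *)

Definition eventually (P : R -> Prop) : Prop :=
  exists a : R, forall x : R, a < x -> P x.

Lemma eventually_and (P Q : R -> Prop) :
  eventually P -> eventually Q -> eventually (fun x => P x /\ Q x).
Proof.
  intros [a Ha] [b Hb]. exists (Rmax a b). intros x Hx.
  pose proof (Rmax_l a b). pose proof (Rmax_r a b).
  split; [apply Ha | apply Hb]; lra.
Qed.

Lemma eventually_mono (P Q : R -> Prop) :
  (forall x, P x -> Q x) -> eventually P -> eventually Q.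
Proof. intros PQ [a Ha]. exists a. auto. Qed.

Lemma germ_eq_sym (f g : R -> R) : germ_eq f g -> germ_eq g f.
Proof. intros [a Ha]. exists a. intros x Hx. symmetry. auto. Qed.

Lemma tends_to_infty_germ (f g : R -> R) :
  tends_to_infty f -> germ_eq f g -> tends_to_infty g.
Proof.
  intros Hf Hfg M.
  apply (eventually_mono (fun x => M < f x /\ f x = g x)).
  - intros x [HM <-]. exact HM.
  - apply eventually_and; [apply Hf | exact Hfg].
Qed.

(* Since exp y > 1 + y, exp y exceeds M once y exceeds |M|. *)
Lemma tends_to_infty_exp (f : R -> R) :
  tends_to_infty f -> tends_to_infty (fun x => exp (f x)).
Proof.
  intros Hf M. apply (eventually_mono (fun x => Rabs M < f x)); [|apply Hf].
  intros x Hx. pose proof (Rabs_pos M). pose proof (RRle_abs M).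
  assert (1 + f x < exp (f x)) by (apply exp_ineq1; lra). lra.
Qed.

Lemma tends_to_infty_ln (f : R -> R) :
  tends_to_infty f -> tends_to_infty (fun x => ln (f x)).
Proof.
  intros Hf M. apply (eventually_mono (fun x => exp M < f x)); [|apply Hf].
  intros x Hx. rewrite <- (ln_exp M) at 1.
  apply ln_increasing; [apply exp_pos | exact Hx].
Qed.

Lemma tends_to_infty_scale (c : R) (f : R -> R) :
  0 < c -> tends_to_infty f -> tends_to_infty (fun x => c * f x).
Proof.
  intros Hc Hf M. apply (eventually_mono (fun x => M / c < f x)); [|apply Hf].
  intros x Hx. replace M with (c * (M / c)) by (field; lra).
  apply Rmult_lt_compat_l; assumption.
Qed.

Lemma tends_to_infty_mult (f g : R -> R) :
  tends_to_infty f -> tends_to_infty g -> tends_to_infty (fun x => f x * g x).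
Proof.
  intros Hf Hg M.
  apply (eventually_mono (fun x => Rabs M + 1 < f x /\ 1 < g x)).
  - intros x [Hfx Hgx]. pose proof (RRle_abs M). pose proof (Rabs_pos M). nra.
  - apply eventually_and; [apply Hf | apply Hg].
Qed.

Lemma tends_to_infty_power (f g : R -> R) (c : R) :
  tends_to_infty f -> tends_to_infty g -> 0 < c ->
  tends_to_infty (fun x => exp (c * g x * ln (f x))).
Proof.
  intros Hf Hg Hc. apply tends_to_infty_exp.
  apply (tends_to_infty_germ (fun x => c * (g x * ln (f x)))).
  - apply tends_to_infty_scale; [exact Hc|].
    apply tends_to_infty_mult; [exact Hg | apply tends_to_infty_ln, Hf].
  - exists 0. intros x _. ring.
Qed.

Lemma iter_ln_tends_to_infty (k : nat) : tends_to_infty (iter_ln k).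
Proof.
  induction k as [|k IH].
  - intros M. exists M. simpl. auto.
  - apply (tends_to_infty_ln (iter_ln k) IH).
Qed.

Lemma H_tends_to_infty (f : R -> R) : H f -> tends_to_infty f.
Proof.
  induction 1 as [f g _ IH Hfg | k | f _ IH | f b _ IH _ Hb
                 | f g _ IHf _ IHg _ | f g _ _ _ _ Hdiv].
  - exact (tends_to_infty_germ f g IH Hfg).
  - apply iter_ln_tends_to_infty.
  - exact (tends_to_infty_exp f IH).
  - (* Rpower (f x) b is by definition exp (b * ln (f x)) *)
    apply tends_to_infty_exp, tends_to_infty_scale, tends_to_infty_ln; assumption.
  - exact (tends_to_infty_mult f g IHf IHg).
  - exact Hdiv.
Qed.

Lemma H_eventually_pos (f : R -> R) : H f -> eventually_pos f.
Proof. intros Hf. apply (H_tends_to_infty f Hf 0). Qed.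

(* H is closed under arbitrary products: when A and B have the same germ,
   A * B agrees eventually with the power A^2. *)
Lemma H_mult (A B : R -> R) : H A -> H B -> H (fun x => A x * B x).
Proof.
  intros HA HB. destruct (classic (germ_eq A B)) as [HAB | HnAB].
  - apply (H_germ (fun x => Rpower (A x) (INR 2))).
    + apply H_pow; [exact HA | apply H_eventually_pos, HA | simpl; lra].
    + apply (eventually_mono (fun x => 0 < A x /\ A x = B x)).
      * intros x [Hpos <-]. rewrite Rpower_pow by exact Hpos. simpl. ring.
      * apply eventually_and; [apply H_eventually_pos, HA | exact HAB].
  - apply H_mul; assumption.
Qed.

(* exp (c * A) = (exp A)^c lies in H for c > 0. *)
Lemma H_exp_scale (A : R -> R) (c : R) :
  H A -> 0 < c -> H (fun x => exp (c * A x)).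
Proof.
  intros HA Hc. apply (H_germ (fun x => Rpower (exp (A x)) c)).
  - apply H_pow; [apply H_exp, HA | exists 0; intros; apply exp_pos | exact Hc].
  - exists 0. intros x _. unfold Rpower. rewrite ln_exp. reflexivity.
Qed.

Lemma exp_ln_mult (c a b : R) :
  0 < a -> 0 < b -> exp (c * ln (a * b)) = exp (c * ln a) * exp (c * ln b).
Proof.
  intros Ha Hb. rewrite ln_mult, <- exp_plus by assumption. f_equal. ring.
Qed.

Lemma exp_ln_div (c a b : R) :
  0 < a -> 0 < b -> exp (c * ln (a / b)) = exp (c * ln a) / exp (c * ln b).
Proof.
  intros Ha Hb. unfold Rdiv.
  rewrite ln_mult, ln_Rinv, <- exp_Ropp, <- exp_plus
    by (try apply Rinv_0_lt_compat; assumption).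
  f_equal. ring.
Qed.

Lemma H_power (f : R -> R) : H f -> forall (g : R -> R) (c : R),
  H g -> 0 < c -> H (fun x => exp (c * g x * ln (f x))).
Proof.
  induction 1 as [f f' _ IH Hff' | k | u Hu _ | u b _ IH _ Hb
                 | u v Hu IHu Hv IHv _ | u v Hu IHu Hv IHv Hdiv];
    intros g c Hg Hc.
  - apply (H_germ (fun x => exp (c * g x * ln (f x)))); [auto|].
    apply (eventually_mono (fun x => f x = f' x)); [|exact Hff'].
    intros x ->. reflexivity.
  - (* ln (ln^(k)) = ln^(k+1) *)
    apply (H_germ (fun x => exp (c * (g x * iter_ln (S k) x)))).
    + apply H_exp_scale; [apply H_mult; [exact Hg | apply H_ln] | exact Hc].
    + exists 0. intros x _. simpl. f_equal. ring.
  - (* ln (exp u) = u *)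
    apply (H_germ (fun x => exp (c * (g x * u x)))).
    + apply H_exp_scale; [apply H_mult | ]; assumption.
    + exists 0. intros x _. rewrite ln_exp. f_equal. ring.
  - (* ln (u^b) = b ln u *)
    apply (H_germ (fun x => exp ((c * b) * g x * ln (u x)))).
    + apply IH; [exact Hg | nra].
    + exists 0. intros x _. unfold Rpower. rewrite ln_exp. f_equal. ring.
  - apply (H_germ (fun x => exp (c * g x * ln (u x)) * exp (c * g x * ln (v x)))).
    + apply H_mult; auto.
    + apply (eventually_mono (fun x => 0 < u x /\ 0 < v x)).
      * intros x [Hux Hvx]. symmetry. apply exp_ln_mult; assumption.
      * apply eventually_and; apply H_eventually_pos; assumption.
  - assert (Hsplit : germ_eq
      (fun x => exp (c * g x * ln (u x)) / exp (c * g x * ln (v x)))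
      (fun x => exp (c * g x * ln (u x / v x)))).
    { apply (eventually_mono (fun x => 0 < u x /\ 0 < v x)).
      - intros x [Hux Hvx]. symmetry. apply exp_ln_div; assumption.
      - apply eventually_and; apply H_eventually_pos; assumption. }
    refine (H_germ _ _ _ Hsplit).
    apply H_div; auto.
    apply (tends_to_infty_germ (fun x => exp (c * g x * ln (u x / v x)))).
    + apply tends_to_infty_power; [exact Hdiv | apply H_tends_to_infty, Hg | exact Hc].
    + apply germ_eq_sym, Hsplit.
Qed.

Theorem mainTheorem5 (f g : R -> R) (alpha : R) :
  H f -> H g -> 0 < alpha ->
  H (fun x => exp (alpha * g x * ln (f x))).
Proof.
  intros Hf Hg Halpha. exact (H_power f Hf g alpha Hg Halpha).
Qed.
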